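(* Fix $K,n\in\mathbb{N}$ and $C>0$, and let $X\in[0,C]^K$ and $Y\subseteq[K]$ be (not necessarily independent) random variables with $Y\neq\emptyset$ almost surely. For $V,V_0\in\mathbb{R}^K$ define $f(X,Y;V)=\max_{k\in Y}\{X(k)+V(k)\}$ and $\Delta f(X,Y;V,V_0)=f(X,Y;V)-f(X,Y;V_0)$. Let $\{(X_i,Y_i)\}_{i\in[n]}$ be $n$ i.i.d. samples from the joint distribution of $(X,Y)$. Then for any $\delta\in(0,1)$, $V_0\in\mathbb{R}^K$ and $\alpha\in(0,1]$, with probability at least $1-\delta$, simultaneously for all $V\in\mathbb{R}^K$ with $V-V_0\in[0,C]^K$, $$\frac1n\sum_{i=1}^n\Delta f(X_i,Y_i;V,V_0)\le(1+\alpha)\mathbb{E}[\Delta f(X,Y;V,V_0)]+\frac{2CK\ln\frac{3n}{\delta}}{\alpha n}.$$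
   Context: $[K]=\{1,\dots,K\}$; $[0,C]^K$ is the set of vectors with all entries in $[0,C]$. *)

From HB Require Import structures.
From mathcomp Require Import all_boot all_order all_algebra.
From mathcomp Require Import all_classical all_reals all_analysis.
Set Implicit Arguments. Unset Strict Implicit. Unset Printing Implicit Defensive.
Import Order.TTheory GRing.Theory Num.Theory.
Local Open Scope classical_set_scope.
Local Open Scope ring_scope.

(* f(X,Y;V) = max_{k in Y} (X k + V k); value 0 on the (null) event Y = set0. *)
Definition fmax (R : realType) (K : nat) (x : 'I_K -> R) (y : {set 'I_K})
    (v : 'I_K -> R) : R :=
  match [pick k in y] with
  | Some k0 => \big[Num.max/(x k0 + v k0)]_(k in y) (x k + v k)
  | None => 0
  end.

Definition dfmax (R : realType) (K : nat) (x : 'I_K -> R) (y : {set 'I_K})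
    (v v0 : 'I_K -> R) : R :=
  fmax x y v - fmax x y v0.

(* The event {X in B_1 x ... x B_K, Y in A}: a measurable rectangle for the data
   (X,Y) valued in R^K x 2^[K]; these rectangles form a pi-system containing the
   whole space and generating the sigma-algebra of the data space. *)
Definition rect_event (R : realType) (T : Type) (K : nat)
    (X : T -> 'I_K -> R) (Y : T -> {set 'I_K})
    (B : 'I_K -> set R) (A : {set {set 'I_K}}) : set T :=
  [set t | (forall k, B k (X t k)) /\ Y t \in A].

Definition data_measurable (d : measure_display) (T : measurableType d)
    (R : realType) (K : nat) (X : T -> 'I_K -> R) (Y : T -> {set 'I_K}) : Prop :=
  (forall k, measurable_fun setT (fun t => X t k)) /\
  (forall S : {set 'I_K}, measurable (Y @^-1` [set S])).

Definition same_law (d d' : measure_display) (T : measurableType d)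
    (Om : measurableType d') (R : realType) (K : nat)
    (Q : probability T R) (X : T -> 'I_K -> R) (Y : T -> {set 'I_K})
    (P : probability Om R) (X' : Om -> 'I_K -> R) (Y' : Om -> {set 'I_K}) : Prop :=
  forall (B : 'I_K -> set R) (A : {set {set 'I_K}}),
    (forall k, measurable (B k)) ->
    P (rect_event X' Y' B A) = Q (rect_event X Y B A).

(* Mutual independence of the family ((Xs i, Ys i))_{i < n} under P: product
   rule on all measurable rectangles (subfamilies are obtained by taking the
   whole space, B = setT and A = setT, for the remaining indices). *)
Definition mutually_independent (d' : measure_display) (Om : measurableType d')
    (R : realType) (K n : nat) (P : probability Om R)
    (Xs : 'I_n -> Om -> 'I_K -> R) (Ys : 'I_n -> Om -> {set 'I_K}) : Prop :=
  forall (B : 'I_n -> 'I_K -> set R) (A : 'I_n -> {set {set 'I_K}}),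
    (forall i k, measurable (B i k)) ->
    P (\bigcap_(i in [set: 'I_n]) rect_event (Xs i) (Ys i) (B i) (A i)) =
    (\prod_(i < n) P (rect_event (Xs i) (Ys i) (B i) (A i)))%E.

(* Data (X, Y) are rounded to cells of mesh e and the
   shifts V to a grid of mesh h with (3n)^K points.  For a grid shift g, a
   [0, C]-valued majorant a_g(c) of Delta f on each cell c bounds the empirical
   mean by an average of n i.i.d. bounded variables, so the multiplicative
   Chernoff bound (via expR y <= 1 + y + y^2 on [0, 1]) fails with probability
   at most exp (- alpha n b / C); a union bound over the grid costs
   (3n)^K = exp (K ln (3n)).  Replacing V by its grid point and the data by
   their cell corners loses h + 2e on each side, which fits in the slack of the
   factor 2 for h = C/(3n - 1) and e = C (ln (3n/delta) - 1) / (4n). *)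

From HB Require Import structures.
From mathcomp Require Import all_boot all_order all_algebra.
From mathcomp Require Import all_classical all_reals all_analysis.
From mathcomp Require Import measurable_realfun ring lra.
Import Order.TTheory GRing.Theory Num.Theory.
Local Open Scope classical_set_scope.
Local Open Scope ring_scope.
Set Implicit Arguments. Unset Strict Implicit. Unset Printing Implicit Defensive.

(* The polynomial below is the degree-5 truncation of the binomial expansion
   of (1 - x/8)^8; on [0, 1] it lies between 1/(1 + x + x^2) and (1 - x/8)^8. *)
Lemma quad_mul_poly5_ge1 (R : realFieldType) (x : R) : 0 <= x <= 1 ->
  1 <= (1 + x + x^+2) *
       (1 - x + 7/16 * x^+2 - 7/64 * x^+3 + 35/2048 * x^+4 - 7/4096 * x^+5).
Proof.
move=> /andP[x_ge0 x_le1].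
have -> : (1 + x + x^+2) *
    (1 - x + 7/16 * x^+2 - 7/64 * x^+3 + 35/2048 * x^+4 - 7/4096 * x^+5) =
    1 + x^+2 * (7/16 - 43/64 * x + 707/2048 * x^+2 - 385/4096 * x^+3
                + 63/4096 * x^+4 - 7/4096 * x^+5).
  by rewrite !exprS !expr0; field.
rewrite lerDl; apply: mulr_ge0; first exact: exprn_ge0.
have : 0 <= 7/16 - 43/64 * x + 2029/8192 * x^+2 :> R by rewrite expr2; nra.
have : x^+3 <= x^+2 by rewrite exprS ler_piMl ?exprn_ge0.
have : x^+5 <= x^+4 by rewrite exprS ler_piMl ?exprn_ge0.
have := exprn_ge0 3 x_ge0; have := exprn_ge0 4 x_ge0.
lra.
Qed.

Lemma poly5_le_pow8 (R : realFieldType) (x : R) : 0 <= x <= 1 ->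
  1 - x + 7/16 * x^+2 - 7/64 * x^+3 + 35/2048 * x^+4 - 7/4096 * x^+5 <=
  (1 - x / 8) ^+ 8.
Proof.
move=> /andP[x_ge0 x_le1].
have -> : (1 - x / 8) ^+ 8 =
    1 - x + 7/16 * x^+2 - 7/64 * x^+3 + 35/2048 * x^+4 - 7/4096 * x^+5 +
    (x / 8) ^+ 6 * (28 - x + (x / 8) ^+ 2).
  by rewrite !exprS !expr0; field.
rewrite lerDl; apply: mulr_ge0; first by rewrite exprn_ge0 // divr_ge0.
have : 0 <= (x / 8) ^+ 2 by rewrite exprn_ge0 // divr_ge0.
lra.
Qed.

Lemma expR_le1Dx_sqr (R : realType) (x : R) : 0 <= x <= 1 -> expR x <= 1 + x + x ^+ 2.
Proof.
move=> x01; have /andP[x_ge0 x_le1] := x01.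
have := poly5_le_pow8 x01; have := quad_mul_poly5_ge1 x01.
set p := 1 - x + _ - _ + _ - _ => quad_mul_p_ge1 p_le_pow8.
have pow8_le_expRN : (1 - x / 8) ^+ 8 <= expR (- x).
  have -> : - x = 8%:R * (- (x / 8)) by field.
  rewrite expRM_natl; apply: lerXn2r; rewrite ?nnegrE ?expR_ge0 //; first lra.
  by have := expR_ge1Dx (- (x / 8)); lra.
have quad_gt0 : 0 < 1 + x + x^+2 by have := exprn_ge0 2 x_ge0; lra.
have p_gt0 : 0 < p by rewrite -(pmulr_rgt0 _ quad_gt0); lra.
rewrite -[expR x]invrK -expRN.
apply: (@le_trans _ _ p^-1); first by rewrite lef_pV2 ?posrE ?expR_gt0 //; lra.
by rewrite -[p^-1]mul1r ler_pdivrMr.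
Qed.

Section Chernoff.
Variables (R : realType) (J : finType) (q a : J -> R) (C alpha : R).
Hypotheses (C_gt0 : 0 < C) (alpha_gt0 : 0 < alpha) (alpha_le1 : alpha <= 1).
Hypotheses (a_ge0 : forall c, 0 <= a c) (a_leC : forall c, a c <= C).
Hypotheses (q_ge0 : forall c, 0 <= q c) (q_sum_le1 : \sum_c q c <= 1).

Lemma mgf_le_expR : \sum_c expR (alpha / C * a c) * q c <=
  expR (alpha / C * (1 + alpha) * \sum_c a c * q c).
Proof.
set lam := alpha / C.
have lam_ge0 : 0 <= lam by rewrite divr_ge0 ?ltW.
apply: le_trans (expR_ge1Dx _).
apply: (@le_trans _ _ (\sum_c (1 + lam * (1 + alpha) * a c) * q c)).
  apply: ler_sum => c _; apply: ler_wpM2r => //.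
  have y_ge0 : 0 <= lam * a c by apply: mulr_ge0.
  have y_le_alpha : lam * a c <= alpha by rewrite /lam mulrAC ler_pdivrMr // ler_pM2l.
  apply: (le_trans (expR_le1Dx_sqr _)); first by rewrite y_ge0 (le_trans y_le_alpha).
  have : lam * a c * (lam * a c) <= lam * a c * alpha by apply: ler_wpM2l.
  rewrite expr2; lra.
rewrite (eq_bigr (fun c => q c + lam * (1 + alpha) * (a c * q c))); last first.
  by move=> c _; ring.
by rewrite big_split /= -mulr_sumr lerD2r.
Qed.

Lemma chernoff_upper_tail (n : nat) (b : R) :
  \sum_(f : {ffun 'I_n -> J} |
        n%:R * ((1 + alpha) * \sum_c a c * q c + b) <= \sum_i a (f i))
    \prod_i q (f i) <= expR (- (alpha * n%:R * b / C)).
Proof.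
set mu := \sum_c a c * q c; set s := n%:R * _.
set lam := alpha / C.
have lam_ge0 : 0 <= lam by rewrite divr_ge0 ?ltW.
pose g c := expR (lam * a c) * q c.
have g_ge0 c : 0 <= g c by rewrite mulr_ge0 ?expR_ge0.
have markov : \sum_(f : {ffun 'I_n -> J} | s <= \sum_i a (f i)) \prod_i q (f i) <=
    expR (- (lam * s)) * \sum_(f : {ffun 'I_n -> J}) \prod_i g (f i).
  rewrite mulr_sumr big_mkcond; apply: ler_sum => f _.
  case: ifP => [bad_f|_]; last by rewrite mulr_ge0 ?expR_ge0 ?prodr_ge0.
  rewrite big_split /= -expR_sum mulrA -expRD -[leLHS]mul1r.
  apply: ler_wpM2r; first exact: prodr_ge0.
  apply: le_trans (expR_ge1Dx _); rewrite lerDl -mulr_sumr.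
  have : lam * s <= lam * \sum_i a (f i) by apply: ler_wpM2l.
  lra.
rewrite -(bigA_distr_bigA (fun _ => g)) /= prodr_const card_ord in markov.
apply: (le_trans markov); apply: (@le_trans _ _ (expR (- (lam * s)) *
    expR (lam * (1 + alpha) * mu) ^+ n)).
  apply: ler_wpM2l; first exact: expR_ge0.
  by apply: lerXn2r; rewrite ?nnegrE ?sumr_ge0 ?expR_ge0 //; exact: mgf_le_expR.
rewrite -expRM_natl -expRD /s /lam.
suff -> : - (alpha / C * (n%:R * ((1 + alpha) * mu + b))) +
    n%:R * (alpha / C * (1 + alpha) * mu) = - (alpha * n%:R * b / C) by [].
by ring.
Qed.

End Chernoff.

Section MaxOfSums.
Variables (R : realType) (K : nat).
Implicit Types (x v : 'I_K -> R) (y : {set 'I_K}).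

Lemma fmax_le x x' y v v' c : 0 <= c ->
  (forall k, k \in y -> x k + v k <= x' k + v' k + c) ->
  fmax x y v <= fmax x' y v' + c.
Proof.
move=> c_ge0 le_xv; rewrite /fmax; case: pickP => [k0 k0y|_]; last by rewrite add0r.
have le_max k : k \in y -> x k + v k <=
    \big[Num.max/(x' k0 + v' k0)]_(k in y) (x' k + v' k) + c.
  by move=> ky; rewrite (le_trans (le_xv k ky)) // lerD2r (bigmax_sup k).
by apply: bigmax_le => [|k ky]; apply: le_max.
Qed.

Lemma dfmax_ge0 x y v v0 : (forall k, v0 k <= v k) -> 0 <= dfmax x y v v0.
Proof.
move=> le_v; rewrite subr_ge0 -[leRHS]addr0; apply: fmax_le => // k _.
by rewrite addr0 lerD2l.
Qed.

Lemma dfmax_le x y v v0 c : 0 <= c -> (forall k, v k <= v0 k + c) ->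
  dfmax x y v v0 <= c.
Proof.
move=> c_ge0 le_v; rewrite /dfmax lerBlDl.
by apply: fmax_le => // k _; rewrite -addrA lerD2l.
Qed.

Lemma dfmax_le_shiftV x y v v' v0 c : 0 <= c -> (forall k, v' k <= v k + c) ->
  dfmax x y v' v0 <= dfmax x y v v0 + c.
Proof.
move=> c_ge0 le_v; rewrite /dfmax addrAC lerD2r.
by apply: fmax_le => // k _; rewrite -addrA lerD2l.
Qed.

Lemma le_dfmaxV x y v v' v0 : (forall k, v k <= v' k) ->
  dfmax x y v v0 <= dfmax x y v' v0.
Proof.
by move=> le_v; rewrite -[leRHS]addr0; apply: dfmax_le_shiftV => // k; rewrite addr0.
Qed.

Lemma dfmax_shiftX x x' y v v0 c : 0 <= c -> (forall k, x' k <= x k <= x' k + c) ->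
  dfmax x' y v v0 <= dfmax x y v v0 + c /\ dfmax x y v v0 <= dfmax x' y v v0 + c.
Proof.
move=> c_ge0 le_x.
have up w : fmax x' y w <= fmax x y w + 0.
  by apply: fmax_le => // k _; have := le_x k; lra.
have down w : fmax x y w <= fmax x' y w + c.
  by apply: fmax_le => // k _; have := le_x k; lra.
have := up v; have := up v0; have := down v; have := down v0.
rewrite /dfmax; lra.
Qed.

End MaxOfSums.

Section Measurability.
Variables (d : measure_display) (T : measurableType d) (R : realType).

Lemma measurable_bigmax (I : Type) (r : seq I) (P : pred I) (x0 : T -> R)
    (F : I -> T -> R) :
  measurable_fun setT x0 -> (forall i, measurable_fun setT (F i)) ->
  measurable_fun setT (fun t => \big[Num.max/x0 t]_(i <- r | P i) F i t).
Proof.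
move=> mx0 mF; elim: r => [|i r IHr]; first by under eq_fun do rewrite big_nil.
under eq_fun do rewrite big_cons.
by case: (P i) => //; exact: measurable_maxr.
Qed.

Lemma measurable_fmax (K : nat) (X : T -> 'I_K -> R) (S : {set 'I_K}) (V : 'I_K -> R) :
  (forall k, measurable_fun setT (fun t => X t k)) ->
  measurable_fun setT (fun t => fmax (X t) S V).
Proof.
move=> mX; rewrite /fmax; case: pickP => [k0 _|_]; last exact: measurable_cst.
by apply: measurable_bigmax => [|k]; apply: measurable_funD.
Qed.

Lemma measurable_dfmax (K : nat) (X : T -> 'I_K -> R) (Y : T -> {set 'I_K})
    (V V0 : 'I_K -> R) :
  data_measurable X Y -> measurable_fun setT (fun t => dfmax (X t) (Y t) V V0).
Proof.
move=> [mX mY].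
have -> : (fun t => dfmax (X t) (Y t) V V0) = (fun t =>
    \sum_(S : {set 'I_K}) \1_(Y @^-1` [set S]) t * dfmax (X t) S V V0).
  apply/funext => t; rewrite (bigD1 (Y t)) //= big1 ?addr0.
    by rewrite indicE mem_set // mul1r.
  move=> S /negPf SYt; rewrite indicE memNset ?mul0r //= => YtS.
  by rewrite YtS eqxx in SYt.
apply: measurable_sum => S; apply: measurable_funM; first exact/measurable_indic/mY.
by apply: measurable_funB; apply: measurable_fmax.
Qed.

Lemma rect_event_measurable (K : nat) (X : T -> 'I_K -> R) (Y : T -> {set 'I_K})
    (B : 'I_K -> set R) (A : {set {set 'I_K}}) :
  data_measurable X Y -> (forall k, measurable (B k)) ->
  measurable (rect_event X Y B A).
Proof.
move=> [mX mY] mB.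
have -> : rect_event X Y B A =
    (\bigcap_(k in [set: 'I_K]) ((fun t => X t k) @^-1` B k)) `&`
    (\bigcup_(S in [set S | S \in A]) (Y @^-1` [set S])).
  apply/seteqP; split => t /=.
    by move=> [XB YA]; split; [move=> k _; exact: XB | exists (Y t)].
  by move=> [XB [S /= SA YtS]]; rewrite /rect_event /= YtS; split => // k; exact: XB.
apply: measurableI.
  apply: fin_bigcap_measurable; first exact: finite_finset.
  by move=> k _; rewrite -[_ @^-1` _]setTI; exact: mX.
by apply: fin_bigcup_measurable; [exact: finite_finset | move=> S _; exact: mY].
Qed.

End Measurability.

Lemma bigsetU_sup_cond (T : Type) (I : finType) (P : pred I) (F : I -> set T) i :
  P i -> F i `<=` \big[setU/set0]_(j | P j) F j.
Proof.
move=> Pi t Fit; rewrite -bigcup_seq_cond.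
by exists i => //=; rewrite mem_index_enum.
Qed.

Lemma measure_bigsetU_le (d : measure_display) (T : measurableType d) (R : realType)
    (mu : {measure set T -> \bar R}) (I : Type) (r : seq I) (P : pred I)
    (F : I -> set T) :
  (forall i, measurable (F i)) ->
  (mu (\big[setU/set0]_(i <- r | P i) F i) <= \sum_(i <- r | P i) mu (F i))%E.
Proof.
move=> mF; elim: r => [|i r IHr]; first by rewrite !big_nil measure0.
rewrite !big_cons; case: (P i) => //.
apply: le_trans (measureU2 _ _ _) _ => //; first exact: bigsetU_measurable.
exact: leeD2l.
Qed.

Section PartitionIntegral.
Variables (d : measure_display) (T : measurableType d) (R : realType).
Variables (mu : {measure set T -> \bar R}) (J : finType) (D : J -> set T).
Hypotheses (mD : forall c, measurable (D c))
  (D_disjoint : forall c c' t, D c t -> D c' t -> c = c').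

Lemma sum_indic_le (psi : J -> R) (f : T -> R) t : (forall c, 0 <= psi c) ->
  (forall c, D c t -> psi c <= f t) -> 0 <= f t ->
  \sum_c psi c * \1_(D c) t <= f t.
Proof.
move=> psi_ge0 psi_le f_ge0.
have [[c Dct]|noD] := pselect (exists c, D c t); last first.
  by rewrite big1 // => c _; rewrite indicE memNset ?mulr0 // => Dct; apply: noD; exists c.
rewrite (bigD1 c) //= big1 ?addr0; first by rewrite indicE mem_set // mulr1; exact: psi_le.
move=> c' c'c; rewrite indicE memNset ?mulr0 // => Dc't.
by rewrite (D_disjoint Dc't Dct) eqxx in c'c.
Qed.

Lemma sum_mul_measure_le_integral (psi : J -> R) (f : T -> R) :
  (forall c, 0 <= psi c) -> (forall c t, D c t -> psi c <= f t) ->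
  (forall t, 0 <= f t) -> measurable_fun setT f ->
  (\sum_c (psi c)%:E * mu (D c) <= \int[mu]_t (f t)%:E)%E.
Proof.
move=> psi_ge0 psi_le f_ge0 mf.
have mpsi c : measurable_fun setT (fun t => psi c * \1_(D c) t).
  exact/measurable_funM/measurable_indic.
have -> : (\sum_c (psi c)%:E * mu (D c) =
    \int[mu]_t (\sum_c psi c * \1_(D c) t)%:E)%E.
  under [RHS]eq_integral do rewrite -sumEFin.
  rewrite ge0_integral_sum //; last 2 first.
  - by move=> c; apply/measurable_EFinP.
  - by move=> c t _; rewrite lee_fin mulr_ge0 // indicE.
  apply: eq_bigr => c _.
  rewrite (@integralZl_indic _ _ _ _ _ measurableT (fun _ => D c)) //.
    by rewrite integral_indic // setIT.
  by move=> /lt_geF; rewrite psi_ge0.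
apply: ge0_le_integral => //.
- by move=> t _; rewrite lee_fin sumr_ge0 // => c _; rewrite mulr_ge0 // indicE.
- by apply/measurable_EFinP; exact: measurable_sum.
- exact/measurable_EFinP.
by move=> t _; rewrite lee_fin; apply: sum_indic_le => // c; exact: psi_le.
Qed.

End PartitionIntegral.

(* [(j, S)] encodes the box prod_k [j k * e, (j k + 1) * e[ of data values
   together with the index set [S]. *)
Notation cell K M := ({ffun 'I_K -> 'I_M} * {set 'I_K})%type.

Section Cells.
Variables (R : realType) (K M : nat) (e : R).
Hypothesis e_gt0 : 0 < e.

Definition cell_itv (c : cell K M) (k : 'I_K) : set R :=
  `[(c.1 k)%:R * e, (c.1 k).+1%:R * e[%classic.

Definition cell_corner (c : cell K M) (k : 'I_K) : R := (c.1 k)%:R * e.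

Definition cell_event (T : Type) (X : T -> 'I_K -> R) (Y : T -> {set 'I_K})
    (c : cell K M) : set T :=
  rect_event X Y (cell_itv c) [set c.2].

Lemma cell_itv_corner c k r : cell_itv c k r ->
  cell_corner c k <= r <= cell_corner c k + e.
Proof.
rewrite /cell_itv /cell_corner /= in_itv /= => /andP[-> lt_r] /=.
by apply: ltW; rewrite -natr1 mulrDl mul1r in lt_r.
Qed.

Lemma cell_itv_inj c c' (x : 'I_K -> R) :
  (forall k, cell_itv c k (x k)) -> (forall k, cell_itv c' k (x k)) ->
  c.2 = c'.2 -> c = c'.
Proof.
case: c c' => [j S] [j' S'] /= in_c in_c' ->; congr pair.
apply/ffunP => k; apply: val_inj; apply/eqP; rewrite eqn_leq.
have := in_c k; have := in_c' k; rewrite /cell_itv /= !in_itv /=.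
move=> /andP[le' lt'] /andP[le lt].
have lt_nat (a b : nat) : a%:R * e < b%:R * e -> (a < b)%N by rewrite ltr_pM2r // ltr_nat.
by apply/andP; split; rewrite -ltnS; apply: lt_nat;
  [exact: le_lt_trans lt' | exact: le_lt_trans lt].
Qed.

Lemma cell_event_disjoint (T : Type) (X : T -> 'I_K -> R) (Y : T -> {set 'I_K})
    c c' t :
  cell_event X Y c t -> cell_event X Y c' t -> c = c'.
Proof.
move=> [in_c /[!inE]/eqP Yc] [in_c' /[!inE]/eqP Yc'].
by apply: (cell_itv_inj in_c in_c'); rewrite -Yc -Yc'.
Qed.

Lemma cell_event_measurable (d : measure_display) (T : measurableType d)
    (X : T -> 'I_K -> R) (Y : T -> {set 'I_K}) c :
  data_measurable X Y -> measurable (cell_event X Y c).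
Proof. by move=> mXY; apply: rect_event_measurable => // k; exact: measurable_itv. Qed.

End Cells.

Definition cell_of (R : realType) (K M : nat) (e : R) (x : 'I_K -> R)
    (y : {set 'I_K}) : cell K M.+1 :=
  ([ffun k => inord (Num.truncn (x k / e))], y).

Lemma mem_cell_of (R : realType) (K M : nat) (C e : R) (x : 'I_K -> R) y :
  0 < e -> C / e < M.+1%:R -> (forall k, 0 <= x k <= C) ->
  forall k, cell_itv e (cell_of M e x y) k (x k).
Proof.
move=> e_gt0 CeM x_range k; have /andP[x_ge0 x_leC] := x_range k.
have xe_ge0 : 0 <= x k / e by rewrite divr_ge0 // ltW.
have trunc_lt : (Num.truncn (x k / e) < M.+1)%N.
  by rewrite ltnS truncn_le_nat (le_lt_trans _ CeM) // ler_pM2r ?invr_gt0.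
have /andP[le_x lt_x] := truncn_itv xe_ge0.
by rewrite /cell_itv /= in_itv /= ffunE inordK // -ler_pdivlMr // -ltr_pdivrMr // le_x.
Qed.

Section Grid.
Variables (R : realType) (K m : nat) (C h : R) (V0 : 'I_K -> R).
Hypotheses (h_gt0 : 0 < h) (mh : m%:R * h = C).

Definition grid_point (g : {ffun 'I_K -> 'I_m.+1}) (k : 'I_K) : R :=
  V0 k + (g k)%:R * h.

Lemma grid_point_range g k : 0 <= grid_point g k - V0 k <= C.
Proof.
rewrite /grid_point addrC addKr; apply/andP; split.
  by rewrite mulr_ge0 // ltW.
by rewrite -mh ler_pM2r // ler_nat -ltnS.
Qed.

Lemma exists_grid_point_above (V : 'I_K -> R) : (forall k, 0 <= V k - V0 k <= C) ->
  exists g, forall k, V k <= grid_point g k <= V k + h.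
Proof.
move=> V_range.
exists [ffun k => inord (minn m (Num.truncn ((V k - V0 k) / h)).+1)] => k.
rewrite /grid_point ffunE inordK; last by rewrite ltnS geq_minl.
have /andP[dV_ge0 dV_leC] := V_range k.
set t := Num.truncn _.
have /andP[t_le t_gt] : t%:R <= (V k - V0 k) / h < t.+1%:R.
  by apply: truncn_itv; rewrite divr_ge0 // ltW.
rewrite ler_pdivlMr // in t_le; rewrite ltr_pdivrMr // in t_gt.
have tS : t.+1%:R * h = t%:R * h + h by rewrite -natr1 mulrDl mul1r.
rewrite /minn; case: ltnP => [mt|tm].
  have : m%:R * h <= t.+1%:R * h by rewrite ler_pM2r // ler_nat ltnW.
  rewrite mh; have := h_gt0; lra.
have := h_gt0; lra.
Qed.

Variables (M : nat) (e : R).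
Hypothesis e_gt0 : 0 < e.

(* Clipped to [0, C], as required by the Chernoff bound. *)
Definition cell_majorant (g : {ffun 'I_K -> 'I_m.+1}) (c : cell K M) : R :=
  Num.min C (dfmax (cell_corner e c) c.2 (grid_point g) V0 + e).

Lemma cell_majorant_range g c : 0 <= cell_majorant g c <= C.
Proof.
have C_ge0 : 0 <= C by rewrite -mh mulr_ge0 // ltW.
rewrite /cell_majorant ge_min lexx orTb andbT le_min C_ge0 /=.
apply: addr_ge0; last exact: ltW.
by apply: dfmax_ge0 => k; have /andP[] := grid_point_range g k; rewrite subr_ge0.
Qed.

Lemma dfmax_grid_le_majorant g c (x : 'I_K -> R) :
  (forall k, cell_itv e c k (x k)) ->
  dfmax x c.2 (grid_point g) V0 <= cell_majorant g c.
Proof.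
move=> x_in_c; rewrite le_min; apply/andP; split.
  apply: dfmax_le; first by rewrite -mh mulr_ge0 // ltW.
  by move=> k; have /andP[_] := grid_point_range g k; rewrite lerBlDl addrC.
by case: (dfmax_shiftX c.2 (grid_point g) V0 (ltW e_gt0)
  (fun k => cell_itv_corner (x_in_c k))).
Qed.

Lemma cell_majorant_le_dfmax g c (x V : 'I_K -> R) :
  (forall k, V k <= grid_point g k <= V k + h) ->
  (forall k, cell_itv e c k (x k)) ->
  cell_majorant g c - (h + 2 * e) <= dfmax x c.2 V V0.
Proof.
move=> V_grid x_in_c.
have maj_le : cell_majorant g c <= dfmax (cell_corner e c) c.2 (grid_point g) V0 + e.
  by rewrite ge_min lexx orbT.
have [corner_le _] := dfmax_shiftX c.2 (grid_point g) V0 (ltW e_gt0)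
  (fun k => cell_itv_corner (x_in_c k)).
have grid_le := dfmax_le_shiftV x c.2 V0 (ltW h_gt0) (fun k => proj2 (andP (V_grid k))).
lra.
Qed.

End Grid.

Section Concentration.
Variables (R : realType) (K n M m : nat) (C e h alpha b : R) (V0 : 'I_K -> R).
Hypotheses (C_gt0 : 0 < C) (e_gt0 : 0 < e) (h_gt0 : 0 < h) (mh : m%:R * h = C)
  (CeM : C / e < M.+1%:R) (alpha_gt0 : 0 < alpha) (alpha_le1 : alpha <= 1).
Variables (d : measure_display) (T : measurableType d) (Q : probability T R)
  (X : T -> 'I_K -> R) (Y : T -> {set 'I_K}).
Hypotheses (mXY : data_measurable X Y) (X_range : forall t k, 0 <= X t k <= C).
Variables (d' : measure_display) (Om : measurableType d') (P : probability Om R)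
  (Xs : 'I_n -> Om -> 'I_K -> R) (Ys : 'I_n -> Om -> {set 'I_K}).
Hypotheses (mXYs : forall i, data_measurable (Xs i) (Ys i))
  (law : forall i, same_law Q X Y P (Xs i) (Ys i))
  (indep : mutually_independent P Xs Ys).

Local Notation cell := (cell K M.+1).

Definition cell_prob (c : cell) : R := fine (Q (cell_event e X Y c)).

Lemma cell_probE c : Q (cell_event e X Y c) = (cell_prob c)%:E.
Proof. by rewrite fineK // fin_num_measure //; exact: cell_event_measurable. Qed.

Lemma cell_prob_ge0 c : 0 <= cell_prob c.
Proof. by rewrite -lee_fin -cell_probE measure_ge0. Qed.

Lemma sum_cell_prob_le1 : \sum_c cell_prob c <= 1.
Proof.
rewrite -lee_fin -sumEFin; under eq_bigr do rewrite -cell_probE -[Q _]mul1e.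
apply: le_trans (@sum_mul_measure_le_integral _ _ _ Q _ (cell_event e X Y) _ _
  (fun=> 1) (fun=> 1) _ _ _ _) _.
- by move=> c; exact: cell_event_measurable.
- exact: cell_event_disjoint.
- by move=> *; exact: ler01.
- by move=> *; exact: lexx.
- by move=> *; exact: ler01.
- exact: measurable_cst.
by rewrite integral_cst // mul1e probability_le1.
Qed.

Definition large_deviation_event (a : cell -> R) : set Om :=
  \big[setU/set0]_(f : {ffun 'I_n -> cell} |
      n%:R * ((1 + alpha) * \sum_c a c * cell_prob c + b) <= \sum_i a (f i))
    \bigcap_(i in [set: 'I_n]) cell_event e (Xs i) (Ys i) (f i).

Lemma large_deviation_event_measurable a : measurable (large_deviation_event a).
Proof.
apply: bigsetU_measurable => f _; apply: fin_bigcap_measurable; first exact: finite_finset.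
by move=> i _; exact: cell_event_measurable.
Qed.

Lemma large_deviation_event_prob (a : cell -> R) : (forall c, 0 <= a c <= C) ->
  (P (large_deviation_event a) <= (expR (- (alpha * n%:R * b / C)))%:E)%E.
Proof.
move=> a_range.
apply: le_trans (measure_bigsetU_le _ _ _ _) _.
  move=> f; apply: fin_bigcap_measurable; first exact: finite_finset.
  by move=> i _; exact: cell_event_measurable.
have sample_prob f : P (\bigcap_(i in [set: 'I_n]) cell_event e (Xs i) (Ys i) (f i)) =
    (\prod_i cell_prob (f i))%:E.
  rewrite indep; last by move=> i k; exact: measurable_itv.
  rewrite -prodEFin; apply: eq_bigr => i _.
  by rewrite law ?cell_probE // => k; exact: measurable_itv.
apply: (@le_trans _ _ (\sum_(f : {ffun 'I_n -> cell} |
    (n%:R * ((1 + alpha) * \sum_c a c * cell_prob c + b) <= \sum_i a (f i))%R)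
    (\prod_i cell_prob (f i))%:E)%E).
  by apply: lee_sum => f _; rewrite -sample_prob.
rewrite sumEFin lee_fin; apply: chernoff_upper_tail => //.
- by move=> c; have /andP[] := a_range c.
- by move=> c; have /andP[] := a_range c.
- exact: cell_prob_ge0.
- exact: sum_cell_prob_le1.
Qed.

(* The samples lie in [0, C]^K only almost surely. *)
Definition out_of_range_event (i : 'I_n) : set Om :=
  ~` rect_event (Xs i) (Ys i) (fun=> `[0, C]%classic) [set: {set 'I_K}].

Lemma out_of_range_event_null i : P (out_of_range_event i) = 0%E.
Proof.
have mitv : measurable (`[0, C]%classic : set R) by exact: measurable_itv.
rewrite probability_setC; last exact: rect_event_measurable.
rewrite (law i _ (fun=> mitv)).
have -> : rect_event X Y (fun=> `[0, C]%classic) [set: {set 'I_K}] = setT.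
  apply/seteqP; split => // t _; split; last by rewrite inE.
  by move=> k; rewrite /= in_itv /=; exact: X_range.
by rewrite probability_setT subee.
Qed.

Definition bad_event : set Om :=
  (\big[setU/set0]_(g : {ffun 'I_K -> 'I_m.+1})
      large_deviation_event (cell_majorant C h V0 e g)) `|`
  \big[setU/set0]_(i : 'I_n) out_of_range_event i.

Lemma bad_event_measurable : measurable bad_event.
Proof.
apply: measurableU; apply: bigsetU_measurable => j _.
  exact: large_deviation_event_measurable.
by apply: measurableC; apply: rect_event_measurable => // k; exact: measurable_itv.
Qed.

Lemma bad_event_prob :
  (P bad_event <= ((m.+1 ^ K)%:R * expR (- (alpha * n%:R * b / C)))%:E)%E.
Proof.
have mitv : measurable (`[0, C]%classic : set R) by exact: measurable_itv.
have mOut i : measurable (out_of_range_event i).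
  by apply: measurableC; exact: rect_event_measurable.
rewrite -[X in (_ <= X)%E]adde0.
apply: le_trans (measureU2 _ _ _) _.
- by apply: bigsetU_measurable => g _; exact: large_deviation_event_measurable.
- exact: bigsetU_measurable.
apply: leeD.
  apply: le_trans (measure_bigsetU_le _ _ _ _) _.
    by move=> g; exact: large_deviation_event_measurable.
  apply: (@le_trans _ _ (\sum_(g : {ffun 'I_K -> 'I_m.+1})
      (expR (- (alpha * n%:R * b / C)))%:E)%E).
    apply: lee_sum => g _; apply: large_deviation_event_prob.
    exact: cell_majorant_range.
  by rewrite sumEFin sumr_const card_ffun !card_ord mulr_natl.
apply: le_trans (measure_bigsetU_le _ _ _ _) _ => //.
by rewrite big1 // => i _; exact: out_of_range_event_null.
Qed.

Lemma majorant_sum_le_expectation (V : 'I_K -> R) (g : {ffun 'I_K -> 'I_m.+1}) :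
  (forall k, V0 k <= V k) -> (forall k, V k <= grid_point h V0 g k <= V k + h) ->
  ((\sum_c cell_majorant C h V0 e g c * cell_prob c)%:E <=
   'E_Q[fun t => dfmax (X t) (Y t) V V0] + (h + 2 * e)%:E)%E.
Proof.
move=> V_ge V_grid; set u := h + 2 * e.
pose psi (c : cell) := Num.max 0 (cell_majorant C h V0 e g c - u).
have psi_le_expect : ((\sum_c psi c * cell_prob c)%:E <=
    'E_Q[fun t => dfmax (X t) (Y t) V V0])%E.
  rewrite -sumEFin expectation.unlock; under eq_bigr do rewrite EFinM -cell_probE.
  apply: sum_mul_measure_le_integral.
  - by move=> c; exact: cell_event_measurable.
  - exact: cell_event_disjoint.
  - by move=> c; rewrite le_max lexx.
  - move=> c t [x_in_c /[!inE]/eqP ->]; rewrite ge_max dfmax_ge0 //=.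
    exact: cell_majorant_le_dfmax.
  - by move=> t; exact: dfmax_ge0.
  - exact: measurable_dfmax.
apply: le_trans (leeD2r _ psi_le_expect); rewrite -EFinD lee_fin.
have u_ge0 : 0 <= u by rewrite addr_ge0 ?mulr_ge0 ?ltW.
apply: (@le_trans _ _ (\sum_c (psi c + u) * cell_prob c)).
  by apply: ler_sum => c _; rewrite ler_wpM2r ?cell_prob_ge0 // -lerBlDr le_max lexx orbT.
under eq_bigr do rewrite mulrDl.
by rewrite big_split /= -mulr_sumr lerD2l ler_piMr // sum_cell_prob_le1.
Qed.

Lemma empirical_sum_lt_on_good_event w (V : 'I_K -> R) (g : {ffun 'I_K -> 'I_m.+1}) :
  ~ bad_event w -> (forall k, V k <= grid_point h V0 g k <= V k + h) ->
  \sum_i dfmax (Xs i w) (Ys i w) V V0 <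
    n%:R * ((1 + alpha) * \sum_c cell_majorant C h V0 e g c * cell_prob c + b).
Proof.
move=> good V_grid.
have in_range i k : 0 <= Xs i w k <= C.
  have : rect_event (Xs i) (Ys i) (fun=> `[0, C]%classic) [set: {set 'I_K}] w.
    apply: contrapT => out; apply: good; right.
    exact: (@bigsetU_sup_cond _ _ xpredT out_of_range_event i).
  by move=> [/(_ k)]; rewrite /= in_itv.
pose f := [ffun i => cell_of M e (Xs i w) (Ys i w)].
apply: (@le_lt_trans _ _ (\sum_i cell_majorant C h V0 e g (f i))).
  apply: ler_sum => i _.
  apply: le_trans (le_dfmaxV _ _ _ (fun k => proj1 (andP (V_grid k)))) _.
  rewrite ffunE; exact: (dfmax_grid_le_majorant V0 h_gt0 mh e_gt0 g
    (mem_cell_of _ e_gt0 CeM (in_range i))).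
rewrite ltNge; apply/negP => large; apply: good; left.
apply: (@bigsetU_sup_cond _ _ xpredT _ g) => //.
apply: (@bigsetU_sup_cond _ _ _ _ f large) => i _; rewrite ffunE.
by split; [exact: mem_cell_of (in_range i) | rewrite inE].
Qed.

Hypothesis n_gt0 : (0 < n)%N.

Lemma empirical_mean_le_on_good_event w (V : 'I_K -> R) :
  ~ bad_event w -> (forall k, 0 <= V k - V0 k <= C) ->
  ((n%:R^-1 * \sum_i dfmax (Xs i w) (Ys i w) V V0)%:E <=
   (1 + alpha)%:E * 'E_Q[fun t => dfmax (X t) (Y t) V V0] +
   ((1 + alpha) * (h + 2 * e) + b)%:E)%E.
Proof.
move=> good V_range.
have [g V_grid] := exists_grid_point_above h_gt0 mh V_range.
have V_ge k : V0 k <= V k by have /andP[] := V_range k; rewrite subr_ge0.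
set S := \sum_c cell_majorant C h V0 e g c * cell_prob c.
apply: (@le_trans _ _ ((1 + alpha)%:E * S%:E + b%:E)%E).
  rewrite -EFinM -EFinD lee_fin ler_pdivrMl ?ltr0n // ltW //.
  exact: empirical_sum_lt_on_good_event.
rewrite (EFinD ((1 + alpha) * _)) addeA leeD2r // EFinM -muleDr ?fin_num_adde_defl //.
apply: lee_wpmul2l; first by rewrite lee_fin addr_ge0 // ltW.
exact: majorant_sum_le_expectation.
Qed.

Lemma good_event_exists : exists E : set Om,
  [/\ measurable E,
      ((1 - (m.+1 ^ K)%:R * expR (- (alpha * n%:R * b / C)))%:E <= P E)%E &
      forall w, E w -> forall V : 'I_K -> R, (forall k, 0 <= V k - V0 k <= C) ->
        ((n%:R^-1 * \sum_i dfmax (Xs i w) (Ys i w) V V0)%:E <=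
         (1 + alpha)%:E * 'E_Q[fun t => dfmax (X t) (Y t) V V0] +
         ((1 + alpha) * (h + 2 * e) + b)%:E)%E].
Proof.
exists (~` bad_event); split.
- exact/measurableC/bad_event_measurable.
- by rewrite probability_setC ?EFinB ?leeB ?bad_event_prob //; exact: bad_event_measurable.
- by move=> w good V; exact: empirical_mean_le_on_good_event.
Qed.

End Concentration.

Lemma natX_mul_expR_ln_le (R : realType) (K N : nat) (delta : R) :
  (0 < K)%N -> (0 < N)%N -> 0 < delta <= 1 ->
  (N ^ K)%:R * expR (- (K%:R * ln (N%:R / delta))) <= delta.
Proof.
case: K => // K _ N_gt0 /andP[delta_gt0 delta_le1].
have N_pos : 0 < N%:R :> R by rewrite ltr0n.
rewrite -mulrN expRM_natl expRN lnK ?posrE ?divr_gt0 // natrX -exprMn.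
rewrite invf_div mulrC divfK ?gt_eqF // exprS -[leRHS]mulr1.
by apply: ler_wpM2l; [exact: ltW | exact: exprn_ile1 (ltW delta_gt0) delta_le1].
Qed.

Lemma one_lt_ln_ratio (R : realType) (n : nat) (delta : R) :
  (0 < n)%N -> 0 < delta < 1 -> 1 < ln (3 * n%:R / delta).
Proof.
move=> n_gt0 /andP[delta_gt0 delta_lt1].
have ratio_gt0 : 0 < 3 * n%:R / delta by rewrite divr_gt0 // mulr_gt0 // ltr0n.
rewrite -ltr_expR lnK ?posrE //.
have expR1_le3 : expR 1 <= 3 :> R.
  by have := @expR_le1Dx_sqr R 1; rewrite ler01 lexx expr1n => /(_ isT); lra.
apply: le_lt_trans expR1_le3 _; rewrite ltr_pdivlMr //.
have : 3 * delta < 3 * n%:R by rewrite ltr_pM2l // (lt_le_trans delta_lt1) // ler1n.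
lra.
Qed.

Lemma deviation_budget_le (R : realFieldType) (K : nat) (c alpha L h e : R) :
  (0 < K)%N -> 0 < c -> 0 < alpha <= 1 -> 1 <= L -> 0 <= h -> 0 <= e ->
  2 * h <= c -> 4 * e <= c * (L - 1) ->
  (1 + alpha) * (h + 2 * e) + c * K%:R * L / alpha <= 2 * c * K%:R * L / alpha.
Proof.
move=> K_gt0 c_gt0 /andP[alpha_gt0 alpha_le1] L_ge1 h_ge0 e_ge0 le_h le_e.
have le_2u : (1 + alpha) * (h + 2 * e) <= 2 * (h + 2 * e).
  by rewrite ler_wpM2r ?addr_ge0 ?mulr_ge0 //; lra.
have le_cL : c * L <= c * K%:R * L / alpha.
  have K_ge1 : 1 <= K%:R :> R by rewrite ler1n.
  rewrite ler_pdivlMr // (_ : c * K%:R * L = c * L * K%:R); last by ring.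
  apply: ler_wpM2l; last lra.
  by apply: mulr_ge0; [exact: ltW | lra].
have -> : 2 * c * K%:R * L / alpha = c * K%:R * L / alpha + c * K%:R * L / alpha by ring.
have : c * L = c + c * (L - 1) by ring.
lra.
Qed.

Lemma double_mesh_le (R : realFieldType) (n : nat) (C : R) :
  (0 < n)%N -> 0 <= C -> 2 * (C / ((3 * n)%N.-1)%:R) <= C / n%:R.
Proof.
move=> n_gt0 C_ge0.
have n_pos : 0 < n%:R :> R by rewrite ltr0n.
have le_2n : (2 * n <= (3 * n).-1)%N by rewrite -ltnS prednK ?muln_gt0 // ltn_pmul2r.
have m_pos : 0 < ((3 * n)%N.-1)%:R :> R by rewrite ltr0n (leq_trans _ le_2n) ?muln_gt0.
rewrite mulrCA ler_wpM2l // ler_pdivrMr // mulrC ler_pdivlMr //.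
by rewrite -natrM ler_nat.
Qed.

Lemma discretization_parameters (R : realType) (K n : nat) (C delta alpha : R) :
  (0 < K)%N -> (0 < n)%N -> 0 < C -> 0 < delta < 1 -> 0 < alpha <= 1 ->
  exists (m : nat) (h e b : R), [/\ 0 < h, m%:R * h = C, 0 < e,
    (m.+1 ^ K)%:R * expR (- (alpha * n%:R * b / C)) <= delta &
    (1 + alpha) * (h + 2 * e) + b <=
      2 * C * K%:R * ln (3 * n%:R / delta) / (alpha * n%:R)].
Proof.
move=> K_gt0 n_gt0 C_gt0 delta01 alpha01.
have [[delta_gt0 delta_lt1] [alpha_gt0 _]] := (andP delta01, andP alpha01).
set L := ln _; have L_gt1 : 1 < L := one_lt_ln_ratio n_gt0 delta01.
have n_pos : 0 < n%:R :> R by rewrite ltr0n.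
pose m := (3 * n)%N.-1; have mS : m.+1 = (3 * n)%N by rewrite prednK // muln_gt0.
have m_pos : 0 < m%:R :> R by rewrite ltr0n -ltnS mS (leq_trans _ (leq_pmulr 3 n_gt0)).
pose e := C * (L - 1) / (4 * n%:R); pose b := C / n%:R * K%:R * L / alpha.
have h_gt0 : 0 < C / m%:R by rewrite divr_gt0.
have e_gt0 : 0 < e by rewrite !divr_gt0 ?mulr_gt0 // subr_gt0.
exists m, (C / m%:R), e, b; split => //.
- by rewrite mulrC divfK ?gt_eqF.
- rewrite mS (_ : alpha * n%:R * b / C = K%:R * L); last first.
    by rewrite /b; field; rewrite (gt_eqF C_gt0) (gt_eqF alpha_gt0) (gt_eqF n_pos).
  rewrite /L -[3 * n%:R](natrM R 3 n).
  by apply: natX_mul_expR_ln_le; rewrite ?muln_gt0 ?delta_gt0 ?(ltW delta_lt1).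
have -> : 2 * C * K%:R * L / (alpha * n%:R) = 2 * (C / n%:R) * K%:R * L / alpha.
  by field; rewrite (gt_eqF alpha_gt0) (gt_eqF n_pos).
have e4 : 4 * e = C / n%:R * (L - 1) by rewrite /e; field; rewrite (gt_eqF n_pos).
apply: deviation_budget_le => //; first by rewrite divr_gt0.
- exact: ltW.
- exact: ltW.
- exact: ltW.
- exact/double_mesh_le/ltW.
- by rewrite e4.
Qed.

Lemma dim_gt0_of_nonempty (d : measure_display) (T : measurableType d) (R : realType)
    (Q : probability T R) (K : nat) (Y : T -> {set 'I_K}) :
  Q [set t | Y t = finset.set0] = 0%E -> (0 < K)%N.
Proof.
rewrite lt0n; apply: contraPN => /eqP K0.
have -> : [set t | Y t = finset.set0] = setT.
  apply/seteqP; split => // t _ /=; apply/setP => k.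
  by have := ltn_ord k; rewrite {2}K0.
by rewrite probability_setT => /eqP; rewrite onee_eq0.
Qed.

Lemma expectation_dfmax_ge0 (d : measure_display) (T : measurableType d)
    (R : realType) (Q : probability T R) (K : nat) (X : T -> 'I_K -> R)
    (Y : T -> {set 'I_K}) (V V0 : 'I_K -> R) :
  (forall k, V0 k <= V k) -> (0 <= 'E_Q[fun t => dfmax (X t) (Y t) V V0])%E.
Proof.
move=> V_ge; rewrite expectation.unlock; apply: integral_ge0 => t _.
by rewrite lee_fin dfmax_ge0.
Qed.

Unset Implicit Arguments.

Theorem lemma7 (R : realType) (K n : nat) (C : R) (hC : 0 < C)
  (d : measure_display) (T : measurableType d) (Q : probability T R)
  (X : T -> 'I_K -> R) (Y : T -> {set 'I_K})
  (hXY : data_measurable X Y)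
  (hX : forall t k, 0 <= X t k <= C)
  (hY : Q [set t | Y t = finset.set0] = 0%E)
  (d' : measure_display) (Om : measurableType d') (P : probability Om R)
  (Xs : 'I_n -> Om -> 'I_K -> R) (Ys : 'I_n -> Om -> {set 'I_K})
  (hXYs : forall i, data_measurable (Xs i) (Ys i))
  (hlaw : forall i, same_law Q X Y P (Xs i) (Ys i))
  (hind : mutually_independent P Xs Ys)
  (delta : R) (hdelta : 0 < delta < 1) (V0 : 'I_K -> R)
  (alpha : R) (halpha : 0 < alpha <= 1) :
  exists E : set Om, measurable E /\ (P E >= (1 - delta)%:E)%E /\
    forall w, E w ->
      forall V : 'I_K -> R, (forall k, 0 <= V k - V0 k <= C) ->
        (((n%:R)^-1 * \sum_(i < n) dfmax (Xs i w) (Ys i w) V V0)%:E <=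
         (1 + alpha)%:E * 'E_Q[fun t => dfmax (X t) (Y t) V V0] +
         (2 * C * K%:R * ln (3 * n%:R / delta) / (alpha * n%:R))%:E)%E.
Proof.
have [delta_gt0 _] := andP hdelta; have [alpha_gt0 alpha_le1] := andP halpha.
have [n0|n_gt0] := posnP n.
  (* With no samples, [n%:R^-1] and the division by [alpha * n%:R] are both 0. *)
  exists setT; split=> //; split=> [|w _ V V_range].
    by rewrite probability_setT lee_fin gerDl oppr_le0 ltW.
  have -> : n%:R = 0 :> R by rewrite n0.
  rewrite invr0 mul0r !mulr0 invr0 mulr0 adde0.
  apply: mule_ge0; first by rewrite lee_fin addr_ge0 // ltW.
  by apply: expectation_dfmax_ge0 => k; have /andP[] := V_range k; rewrite subr_ge0.
have [m [h [e [b [h_gt0 mh e_gt0 union_le budget_le]]]]] :=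
  discretization_parameters (dim_gt0_of_nonempty hY) n_gt0 hC hdelta halpha.
have [E [mE PE E_good]] := good_event_exists b V0 hC e_gt0 h_gt0 mh
  (truncnS_gt (C / e)) alpha_gt0 alpha_le1 hXY hX hXYs hlaw hind n_gt0.
exists E; split=> //; split.
  by apply: le_trans PE; rewrite lee_fin lerD2l lerN2.
move=> w Ew V V_range; apply: le_trans (E_good w Ew V V_range) _.
by rewrite leeD2l // lee_fin.
Qed.
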